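(* Let $n\ge 1$, $m\ge 2$ and $k\in\{0,\dots,n-1\}$, and let $\mathcal{C}^k_{ac}$ be the class of all complete acyclic $k$-bounded CP-nets over $n$ variables of domain size $m$, over the instance space $\mathcal{X}_{swap}$. Then \[\mathrm{RTD}(\mathcal{C}^k_{ac})=(m-1)\mathcal{M}_k=(m-1)(n-k)m^k+m^k-1.\]
   Context: Variables $V=\{v_1,\dots,v_n\}$, each $v_i$ with a finite domain $D_{v_i}$ of size $m$. An outcome assigns a value to every variable; $\mathcal{O}_X$ denotes assignments to $X\subseteq V$. A CP-net specifies for each $v_i$ a parent set $Pa(v_i)\subseteq V\setminus\{v_i\}$ and, for each context $\gamma\in\mathcal{O}_{Pa(v_i)}$, either a strict total order $\succ^{v_i}_\gamma$ on $D_{v_i}$ or nothing; it is complete if an order is given for every variable and context; parents are non-dummy (each parent actually affects the preferences). It is acyclic if the graph with edges $(v_j,v_i)$ for $v_j\in Pa(v_i)$ is acyclic, and $k$-bounded if all parent sets have size $\le k$. Improving flip: changing only $v_i$ from $o[v_i]$ to a value preferred under $\succ^{v_i}_{o[Pa(v_i)]}$; $o'\succ o$ iff a nonempty sequence of improving flips leads from $o$ to $o'$. A swap is an ordered pair $x=(x.1,x.2)$ of outcomes differing in exactly one variable; $\mathcal{X}_{swap}$ contains, for each unordered such pair, exactly one of its two orderings (fixed arbitrarily). A CP-net $N$ is the concept $c_N(x)=1$ iff $x.1\succ x.2$. For a concept class $\mathcal{C}$ and $c\in\mathcal{C}$, a teaching set for $c$ is a set of labeled examples with which $c$ is the only consistent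 concept in $\mathcal{C}$; $\mathrm{TD}(c,\mathcal{C})$ is the minimum size of a teaching set, $\mathrm{TD}_{min}(\mathcal{C})=\min_{c\in\mathcal{C}}\mathrm{TD}(c,\mathcal{C})$. Recursive teaching dimension: $\mathcal{C}_0=\mathcal{C}$, $\mathcal{C}_{i+1}=\mathcal{C}_i\setminus\{c\in\mathcal{C}_i:\mathrm{TD}(c,\mathcal{C}_i)=\mathrm{TD}_{min}(\mathcal{C}_i)\}$ while $\mathcal{C}_i\neq\emptyset$, and $\mathrm{RTD}(\mathcal{C})=\max_i\mathrm{TD}_{min}(\mathcal{C}_i)$. $\mathcal{M}_k=(n-k)m^k+\frac{m^k-1}{m-1}$. *)

From mathcomp Require Import all_boot all_order all_fingroup.
Set Implicit Arguments. Unset Strict Implicit. Unset Printing Implicit Defensive.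

Section CPnets.
Variables n m : nat.

Definition outcome := {ffun 'I_n -> 'I_m}.

Definition swapb (o o' : outcome) : bool := #|[set i | o i != o' i]| == 1.

(* A strict total order on 'I_m is encoded by a ranking permutation p:
   a is preferred to b  iff  p a < p b. *)
Definition prefv (p : {perm 'I_m}) (a b : 'I_m) : bool := p a < p b.

(* A (complete) CP-net: parent sets, and for each variable a conditional
   preference table given as a function of the whole outcome (required below
   to depend only on the values of the parents, i.e. on the context). *)
Definition cpnet : finType :=
  ({ffun 'I_n -> {set 'I_n}} * {ffun 'I_n -> {ffun outcome -> {perm 'I_m}}})%type.

Definition Pa (N : cpnet) (i : 'I_n) : {set 'I_n} := N.1 i.
Definition cpt (N : cpnet) (i : 'I_n) (o : outcome) : {perm 'I_m} := N.2 i o.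

Definition cpt_wf (N : cpnet) : bool :=
  [forall i, [forall o : outcome, [forall o' : outcome,
     [forall j in Pa N i, o j == o' j] ==> (cpt N i o == cpt N i o')]]].

Definition agree_except (j : 'I_n) (o o' : outcome) : bool :=
  [forall l, (l != j) ==> (o l == o' l)].

Definition nondummy (N : cpnet) : bool :=
  [forall i, [forall j in Pa N i, [exists o : outcome, [exists o' : outcome,
     agree_except j o o' && (cpt N i o != cpt N i o')]]]].

Definition dep_edge (N : cpnet) : rel 'I_n := fun j i => j \in Pa N i.

Definition acyclicb (N : cpnet) : bool :=
  [forall i, ~~ [exists j, dep_edge N i j && connect (dep_edge N) j i]].

Definition kbounded (k : nat) (N : cpnet) : bool := [forall i, #|Pa N i| <= k].

Definition ok_net (k : nat) (N : cpnet) : bool :=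
  [&& [forall i, i \notin Pa N i], cpt_wf N, nondummy N, acyclicb N & kbounded k N].

Definition iflip (N : cpnet) (o o' : outcome) : bool :=
  [exists i, agree_except i o o' && prefv (cpt N i o) (o' i) (o i)].

Definition succ (N : cpnet) (o' o : outcome) : bool :=
  [exists o1, iflip N o o1 && connect (iflip N) o1 o'].

(* An orientation choosing exactly one ordering of each unordered swap pair *)
Definition orientation_ok (orient : rel outcome) : Prop :=
  forall o o', swapb o o' -> orient o o' = ~~ orient o' o.

Definition Xswap (orient : rel outcome) : finType :=
  {x : outcome * outcome | swapb x.1 x.2 && orient x.1 x.2}.

Definition concept_of (orient : rel outcome) (N : cpnet) : {ffun Xswap orient -> bool} :=
  [ffun x => succ N (val x).1 (val x).2].

Definition Cac (orient : rel outcome) (k : nat) : {set {ffun Xswap orient -> bool}} :=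
  concept_of orient @: [set N : cpnet | ok_net k N].

End CPnets.

Section Teaching.
Variable X : finType.
Notation concept := {ffun X -> bool}.

Definition teaching_set (C : {set concept}) (c : concept) (S : {set X}) : bool :=
  [forall c' in C, [forall x in S, c' x == c x] ==> (c' == c)].

Definition TD (C : {set concept}) (c : concept) : nat :=
  \big[minn/#|X|]_(S : {set X} | teaching_set C c S) #|S|.

Definition TDmin (C : {set concept}) : nat :=
  \big[minn/#|X|]_(c in C) TD C c.

Definition rtd_step (C : {set concept}) : {set concept} :=
  C :\: [set c in C | TD C c == TDmin C].

(* C_i = iter i rtd_step C ; each step on a nonempty class removes at least
   one concept, so all nonempty C_i have i <= #|C|. *)
Definition RTD (C : {set concept}) : nat :=
  \max_(i < #|C|.+1 | iter i rtd_step C != set0) TDmin (iter i rtd_step C).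
End Teaching.

Definition Mk (n m k : nat) : nat := (n - k) * m ^ k + (m ^ k - 1) %/ (m - 1).

From mathcomp Require Import all_boot all_order all_fingroup.
From mathcomp Require Import zify.
Set Implicit Arguments. Unset Strict Implicit. Unset Printing Implicit Defensive.

(* A swap (x1, x2) differing in v_i is entailed by an acyclic CP-net N exactly
   when it is a single improving flip: improving flips strictly decrease the
   potential sum_i rank_i(o) * m ^ w(i), where w numbers the variables so that
   parents lie above their children.  Hence the concept of N is determined by
   its parent sets and by the m - 1 adjacent swaps of every row of every table.
   Upper bound: in any subclass pick N of maximal total parent size.  The
   (m - 1) * sum_i m ^ |Pa(v_i)| <= (m - 1) * M_k adjacent swaps in the contexts
   of the parents teach N: a consistent N' has the same rows there, so, parents
   being non-dummy, Pa(v_i) is contained in Pa'(v_i); by maximality they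
   coincide, and then N' = N.
   Lower bound: fix a topological order and enlarge each Pa(v_i) to a set of
   min(i, k) predecessors.  Transposing one adjacent pair of the table of v_i in
   one context of that set yields a net of the class that disagrees with N only
   on swaps of that pair in that context, so every teaching set of N in the
   whole class meets (m - 1) * sum_i m ^ min(i, k) = (m - 1) * M_k disjoint sets
   of swaps. *)

Section RankBy.
Variables (T : finType) (key : T -> nat).
Hypothesis key_inj : injective key.

Definition rank_by i := #|[set j | key j < key i]|.

Lemma rank_by_lt_card i : rank_by i < #|T|.
Proof.
rewrite -cardsT; apply/proper_card; rewrite properT; apply/negP => /eqP E.
by have := in_setT i; rewrite -E inE ltnn.
Qed.

Lemma rank_by_mono i j : key i < key j -> rank_by i < rank_by j.
Proof.
move=> lt_ij; apply/proper_card/properP; split.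
  by apply/subsetP => l; rewrite !inE => /ltn_trans; apply.
by exists i; rewrite !inE ?lt_ij ?ltnn.
Qed.

Lemma rank_by_inj : injective rank_by.
Proof.
move=> i j eq_ij; apply: key_inj.
by case: (ltngtP (key i) (key j)) => // /rank_by_mono; rewrite eq_ij ltnn.
Qed.

Definition ord_rank_by i : 'I_#|T| := Ordinal (rank_by_lt_card i).

Lemma sum_rank_by (F : nat -> nat) : \sum_i F (rank_by i) = \sum_(q < #|T|) F q.
Proof.
have inj : injective ord_rank_by by move=> i j /(congr1 val) /rank_by_inj.
by rewrite (reindex ord_rank_by) //; apply/onW_bij/(inj_card_bij inj); rewrite card_ord.
Qed.

End RankBy.

Section TeachingDimension.
Variable X : finType.
Implicit Types (C : {set {ffun X -> bool}}) (c : {ffun X -> bool}) (S : {set X}).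

Lemma teaching_setT C c : teaching_set C c [set: X].
Proof.
apply/forall_inP => c' _; apply/implyP => /forall_inP agree.
by apply/eqP/ffunP => x; apply/eqP/agree; rewrite inE.
Qed.

Lemma TD_le C c S : teaching_set C c S -> TD C c <= #|S|.
Proof.
move=> tS; rewrite /TD -minEnat.
exact: (Order.TotalTheory.bigmin_le_cond _ (P := teaching_set C c) (fun S => #|S|) tS).
Qed.

Lemma TD_ge C c B :
  (forall S, teaching_set C c S -> B <= #|S|) -> B <= TD C c.
Proof.
move=> lowB; apply: (big_ind (fun v => B <= v)) => //.
- by rewrite -cardsT; apply/lowB/teaching_setT.
- by move=> u v Bu Bv; rewrite leq_min Bu Bv.
Qed.

Lemma iter_rtd_step_sub j C : iter j (@rtd_step X) C \subset C.
Proof.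
elim: j => [|j IHj] /=; first exact: subxx.
by apply: subset_trans IHj; rewrite subDset subsetUr.
Qed.

Lemma RTD_eq C B :
    C != set0 ->
    (forall c S, c \in C -> teaching_set C c S -> B <= #|S|) ->
    (forall C', C' \subset C -> C' != set0 -> exists2 c, c \in C' & TD C' c <= B) ->
  RTD C = B.
Proof.
move=> C0 lowB upB; apply/eqP; rewrite eqn_leq; apply/andP; split.
  apply/bigmax_leqP => j Cj0.
  have [c cCj TDc] := upB _ (iter_rtd_step_sub j C) Cj0.
  apply: leq_trans TDc; rewrite /TDmin -minEnat.
  exact: (Order.TotalTheory.bigmin_le_cond _ (P := fun c => c \in _) (TD _) cCj).
have [c0 c0C] := set0Pn _ C0.
apply: (@leq_trans (TDmin C)); last first.
  exact: (@leq_bigmax_cond _ _ (fun i : 'I_#|C|.+1 => TDmin (iter i (@rtd_step X) C)) ord0).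
apply: (big_ind (fun v => B <= v)).
- by rewrite -cardsT; apply/(lowB c0)/teaching_setT.
- by move=> u v Bu Bv; rewrite leq_min Bu Bv.
- by move=> c cC; apply: TD_ge => S; apply: lowB.
Qed.

End TeachingDimension.

Lemma ltn_sum_dominant (I : finType) (i : I) (F F' G : I -> nat) c :
    F' i + c <= F i -> (forall l, l != i -> F' l <= F l + G l) -> \sum_l G l < c ->
  \sum_l F' l < \sum_l F l.
Proof.
move=> Fi Fl Gc; rewrite (bigD1 i) //= [X in _ < X](bigD1 i) //=.
have : \sum_(l | l != i) F' l <= \sum_(l | l != i) F l + \sum_(l | l != i) G l.
  by rewrite -big_split; apply: leq_sum.
have : \sum_(l | l != i) G l <= \sum_l G l by rewrite [X in _ <= X](bigD1 i) ?leq_addl.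
lia.
Qed.

Lemma sum_geometric_lt m r : 0 < m -> \sum_(q < r) (m - 1) * m ^ q < m ^ r.
Proof.
move=> m_gt0; rewrite -big_distrr /= subn1 -predn_exp.
by rewrite prednK ?ltnSn // expn_gt0 m_gt0.
Qed.

Lemma eq_sets_of_sum_card (I T : finType) (A B : I -> {set T}) :
  (forall i, A i \subset B i) -> \sum_i #|B i| <= \sum_i #|A i| -> forall i, A i = B i.
Proof.
move=> AB; have leAB := leqif_sum (P := xpredT) (fun i _ => subset_leqif_cards (AB i)).
by rewrite (geq_leqif leAB) => /forallP eqAB i; apply/eqP/eqAB.
Qed.

Lemma exists_set_between (T : finType) (A B : {set T}) s :
  A \subset B -> #|A| <= s <= #|B| -> exists Q : {set T}, [/\ A \subset Q, Q \subset B & #|Q| = s].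
Proof.
move=> AB; elim: s => [|s IHs] /andP [As sB].
  by exists A; split=> //; apply/eqP; rewrite -leqn0.
have [ltAs|geAs] := ltnP #|A| s.+1; last first.
  by exists A; split=> //; apply/eqP; rewrite eqn_leq As.
have [Q [AQ QB cardQ]] := IHs (introT andP (conj ltAs (ltnW sB))).
have [x /setDP [xB xQ]] : exists x, x \in B :\: Q.
  apply/set0Pn; rewrite setD_eq0; apply: contraTN sB => BQ.
  by rewrite -ltnNge ltnS -cardQ subset_leq_card.
exists (x |: Q); split.
- exact: subset_trans AQ (subsetUr _ _).
- by rewrite subUset sub1set xB.
- by rewrite cardsU1 xQ cardQ.
Qed.

Lemma perm_incr_id m (s : {perm 'I_m}) :
  (forall a b : 'I_m, b = a.+1 :> nat -> s a < s b) -> s = 1%g.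
Proof.
move=> s_incr.
have up t (a : 'I_m) : a = t :> nat -> t <= s a.
  elim: t a => [|t IHt] a ta //.
  have tm : t < m by have := ltn_ord a; lia.
  by have := s_incr (Ordinal tm) a ta; have := IHt (Ordinal tm) erefl; lia.
have down d (a : 'I_m) : a + d = m.-1 -> s a <= a.
  elim: d a => [|d IHd] a ad.
    by have := ltn_ord (s a); rewrite addn0 in ad; lia.
  have bm : a.+1 < m by have := ltn_ord a; lia.
  have le_sb : s (Ordinal bm) <= a.+1 := IHd (Ordinal bm) (etrans (addSnnS _ _) ad).
  have := s_incr a (Ordinal bm) erefl; lia.
apply/permP => a; apply: val_inj; rewrite perm1 /=.
have := up _ a erefl; have := down (m.-1 - a) a; have := ltn_ord a; lia.
Qed.

Lemma tperm_adjacent M (t u a b : 'I_M) : u = t.+1 :> nat ->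
  (tperm t u a < tperm t u b) != (a < b) -> (if a < b then a else b) = t.
Proof.
move=> tu; have vE (x : 'I_M) : nat_of_ord (tperm t u x) =
    if x == t :> nat then u : nat else if x == u :> nat then t : nat else x.
  case: tpermP => [->|->|/eqP xt /eqP xu]; first by rewrite eqxx.
    by rewrite eqxx tu (gtn_eqF (ltnSn t)).
  by rewrite (inj_eq val_inj) (negbTE xt) (inj_eq val_inj) (negbTE xu).
move=> sw; apply: val_inj; rewrite /= (fun_if val) /=; move: sw; rewrite !vE tu.
move: (nat_of_ord a) (nat_of_ord b) (nat_of_ord t) => A B T.
by case: (A =P T); case: (A =P T.+1); case: (B =P T); case: (B =P T.+1); case: ifP; lia.
Qed.

Lemma Mk_geometric n m k : 1 < m -> Mk n m k = (n - k) * m ^ k + \sum_(q < k) m ^ q.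
Proof.
by move=> m_gt1; rewrite /Mk !subn1 predn_exp mulKn // -ltnS prednK // ltnW.
Qed.

Lemma sum_expn_minn n m k : 1 < m -> k <= n -> \sum_(q < n) m ^ minn q k = Mk n m k.
Proof.
move=> m_gt1 kn; rewrite Mk_geometric // -(big_mkord xpredT (fun q => m ^ minn q k)).
rewrite (big_cat_nat (leq0n k) kn) /= addnC; congr (_ + _).
  rewrite (eq_big_nat _ _ (F2 := fun _ => m ^ k)) ?sum_nat_const_nat // => q /andP [kq _].
  by rewrite (minn_idPr kq).
by rewrite big_mkord; apply: eq_bigr => q _; rewrite (minn_idPl (ltnW (ltn_ord q))).
Qed.

Lemma Mk_closed n m k : 1 < m -> (m - 1) * Mk n m k = (m - 1) * (n - k) * m ^ k + m ^ k - 1.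
Proof.
move=> m_gt1; rewrite Mk_geometric // mulnDr mulnA !subn1 -predn_exp.
have : 0 < m ^ k by rewrite expn_gt0 ltnW.
by case: (m ^ k) => // b _; rewrite addnS.
Qed.

Section Outcomes.
Variables n m : nat.
Implicit Types (o : outcome n m) (i j l : 'I_n).

Lemma agree_exceptP j o o' :
  reflect (forall l, l != j -> o l = o' l) (agree_except j o o').
Proof.
apply: (iffP forallP) => [agr l lj|agr l]; last by apply/implyP => /agr ->.
by have := agr l; rewrite lj => /eqP.
Qed.

Lemma agree_except_sym j o o' : agree_except j o o' = agree_except j o' o.
Proof. by apply/agree_exceptP/agree_exceptP => agr l /agr. Qed.

Lemma swapb_agree_except j o o' : agree_except j o o' -> o j != o' j -> swapb o o'.
Proof.
move=> /agree_exceptP agr oj; apply/cards1P; exists j; apply/setP => l.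
by rewrite !inE; case: (eqVneq l j) => [->|/agr ->]; rewrite ?eqxx.
Qed.

Definition upd o j (a : 'I_m) : outcome n m := [ffun l => if l == j then a else o l].

Lemma upd_same o j a : upd o j a j = a.
Proof. by rewrite ffunE eqxx. Qed.

Lemma agree_except_upd o j a : agree_except j o (upd o j a).
Proof. by apply/agree_exceptP => l lj; rewrite ffunE (negbTE lj). Qed.

Lemma agree_except_upd2 o j a b : agree_except j (upd o j a) (upd o j b).
Proof. by apply/agree_exceptP => l lj; rewrite !ffunE (negbTE lj). Qed.

Definition relevant (T : eqType) (f : outcome n m -> T) : {set 'I_n} :=
  [set j | [exists o, [exists o', agree_except j o o' && (f o != f o')]]].

Section Relevant.
Variables (T : eqType) (f : outcome n m -> T).

Lemma eq_relevant g : f =1 g -> relevant f = relevant g.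
Proof.
by move=> fg; apply/setP => j; rewrite !inE; do 2 apply: eq_existsb => ?; rewrite !fg.
Qed.

Lemma eq_on_relevant o o' : {in relevant f, forall j, o j = o' j} -> f o = f o'.
Proof.
move Ed : #|[set j | o j != o' j]| => d; elim: d o Ed => [|d IHd] o Ed agr.
  congr f; apply/ffunP => j; apply/eqP/negPn/negP => oj.
  by have := cards0_eq Ed; move/setP/(_ j); rewrite !inE oj.
have [j jd] : exists j, j \in [set j | o j != o' j] by apply/set0Pn; rewrite -card_gt0 Ed.
have oj : o j != o' j by rewrite inE in jd.
have j_irr : j \notin relevant f by apply: contra oj => /agr ->.
have -> : f o = f (upd o j (o' j)).
  apply: contraNeq j_irr => fo; rewrite inE.
  by apply/existsP; exists o; apply/existsP; exists (upd o j (o' j)); rewrite agree_except_upd.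
apply: IHd => [|l /agr ol]; last by rewrite ffunE; case: ifP => // /eqP ->.
apply/eqP; rewrite -eqSS -Ed (cardsD1 j [set l | o l != o' l]) jd add1n eqSS.
apply/eqP/eq_card => l.
by rewrite !inE ffunE; case: (eqVneq l j) => [->|]; rewrite ?eqxx.
Qed.

Lemma relevant_sub (Q : {set 'I_n}) :
  (forall o o', {in Q, forall j, o j = o' j} -> f o = f o') -> relevant f \subset Q.
Proof.
move=> fQ; apply/subsetP => j; rewrite inE => /existsP [o /existsP [o' /andP [agr fo]]].
apply: contraR fo => jQ; apply/eqP/fQ => l lQ.
by move/agree_exceptP: agr; apply; apply: contraNneq jQ => <-.
Qed.

Lemma relevant_comp (h : outcome n m -> outcome n m) :
  (forall j o o', agree_except j o o' -> agree_except j (h o) (h o')) ->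
  relevant (f \o h) \subset relevant f.
Proof.
move=> hagr; apply/subsetP => j; rewrite !inE => /existsP [o /existsP [o' /andP [agr fo]]].
by apply/existsP; exists (h o); apply/existsP; exists (h o'); rewrite hagr.
Qed.

End Relevant.
End Outcomes.

Section Acyclic.
Variables n m : nat.
Implicit Types (N : cpnet n m) (i j : 'I_n).

Definition descendants N i : {set 'I_n} :=
  [set x | [exists c, (i \in Pa N c) && connect (dep_edge N) c x]].

Lemma card_descendants_parent N i j :
  acyclicb N -> j \in Pa N i -> #|descendants N i| < #|descendants N j|.
Proof.
move=> /forallP acN ji; apply/proper_card/properP; split.
  apply/subsetP => x; rewrite !inE => /existsP [c /andP [ic cx]].
  by apply/existsP; exists i; rewrite ji (connect_trans (connect1 ic)).
exists i; rewrite !inE; first by apply/existsP; exists i; rewrite ji connect0.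
exact: acN.
Qed.

(* The number of descendants strictly decreases from a parent to its child;
   the low digit [i] only makes the keys injective. *)
Definition topo_key N i := (n - #|descendants N i|) * n + i.
Definition desc_key N i := #|descendants N i| * n + i.

Lemma mixed_key_inj (f : 'I_n -> nat) : injective (fun i => f i * n + i).
Proof.
move=> i j /(congr1 (modn^~ n)) /=.
by rewrite !modnMDl !modn_small // => /val_inj.
Qed.

Lemma topo_key_inj N : injective (topo_key N).
Proof. exact: mixed_key_inj. Qed.

Lemma desc_key_inj N : injective (desc_key N).
Proof. exact: mixed_key_inj. Qed.

Lemma topo_key_parent N i j : acyclicb N -> j \in Pa N i -> topo_key N j < topo_key N i.
Proof.
move=> acN /(card_descendants_parent acN) lt_desc; rewrite /topo_key.
have := max_card (descendants N j); rewrite card_ord.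
have := ltn_ord i; have := ltn_ord j; nia.
Qed.

Lemma desc_key_parent N i j : acyclicb N -> j \in Pa N i -> desc_key N i < desc_key N j.
Proof.
move=> acN /(card_descendants_parent acN) lt_desc; rewrite /desc_key.
have := ltn_ord i; nia.
Qed.

Lemma acyclic_of_key N (key : 'I_n -> nat) :
  (forall i j, j \in Pa N i -> key j < key i) -> acyclicb N.
Proof.
move=> keyP; apply/forallP => i; apply/existsP => -[j /andP [ij /connectP [p pth E]]].
have key_path a q : path (dep_edge N) a q -> key a <= key (last a q).
  elim: q a => // b q IHq a /andP [ab pq].
  exact: leq_trans (ltnW (keyP _ _ ab)) (IHq _ pq).
by have := key_path _ _ pth; rewrite -E leqNgt keyP.
Qed.

End Acyclic.

Lemma cpt_wf_nondummy n m (N : cpnet n m) :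
  cpt_wf N && nondummy N = [forall i, Pa N i == relevant (cpt N i)].
Proof.
apply/andP/forallP => [[/forallP wf /forallP nd] i | PaE].
  rewrite eqEsubset; apply/andP; split.
    by apply/subsetP => j /(forall_inP (nd i)); rewrite inE.
  apply: relevant_sub => o o' agr; apply/eqP.
  apply: (implyP (forallP (forallP (wf i) o) o')).
  by apply/forall_inP => j /agr ->.
split; apply/forallP => i; rewrite (eqP (PaE i)).
  apply/forallP => o; apply/forallP => o'; apply/implyP => /forall_inP agr.
  by apply/eqP/eq_on_relevant => j /agr /eqP.
by apply/forall_inP => j; rewrite inE.
Qed.

Section Semantics.
Variables (n m k : nat) (N : cpnet n m).
Hypothesis okN : ok_net k N.
Implicit Types (o : outcome n m) (i j : 'I_n).

Lemma ok_parent_irr i : i \notin Pa N i.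
Proof. by case/and5P: okN => /forallP. Qed.

Lemma ok_acyclic : acyclicb N.
Proof. by case/and5P: okN. Qed.

Lemma ok_card_parents i : #|Pa N i| <= k.
Proof. by case/and5P: okN => _ _ _ _ /forallP. Qed.

Lemma Pa_relevant i : Pa N i = relevant (cpt N i).
Proof.
have := cpt_wf_nondummy N; case/and5P: okN => _ -> -> _ _.
by move=> /esym /forallP /(_ i) /eqP.
Qed.

Lemma cpt_eq_on_parents i o o' : {in Pa N i, forall j, o j = o' j} -> cpt N i o = cpt N i o'.
Proof. by rewrite Pa_relevant; apply: eq_on_relevant. Qed.

Lemma cpt_agree_except i j o o' :
  agree_except i o o' -> i \notin Pa N j -> cpt N j o = cpt N j o'.
Proof.
move=> /agree_exceptP agr ij; apply: cpt_eq_on_parents => l lj; apply: agr.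
by apply: contraNneq ij => <-.
Qed.

(* Parents weigh more than their children, so the rank gained at the flipped
   variable outweighs every change of rank below it. *)
Definition weight i := rank_by (desc_key N) i.

Definition potential o := \sum_i cpt N i o (o i) * m ^ weight i.

Lemma potential_flip o o' : iflip N o o' -> potential o' < potential o.
Proof.
case/existsP => i /andP [agr pref].
have m_gt0 : 0 < m := leq_ltn_trans (leq0n _) (ltn_ord (o i)).
have weight_child j : i \in Pa N j -> weight j < weight i.
  by move=> /(desc_key_parent ok_acyclic); apply: rank_by_mono.
apply: (ltn_sum_dominant (i := i) (c := m ^ weight i)
  (G := fun j => if weight j < weight i then (m - 1) * m ^ weight j else 0)).
- rewrite -mulSnr leq_mul2r; apply/orP; right.
  by rewrite -(cpt_agree_except agr (ok_parent_irr i)).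
- move=> j ji; case: ifP => [_|w_ji].
    apply: leq_trans (leq_addl _ _); rewrite leq_mul2r; apply/orP; right.
    by have := ltn_ord (cpt N j o' (o' j)); lia.
  have ij : i \notin Pa N j := contraFN (@weight_child j) w_ji.
  by rewrite addn0 (cpt_agree_except agr ij) (agree_exceptP _ _ _ agr j ji).
- rewrite (sum_rank_by (@desc_key_inj _ _ N)
    (fun q => if q < weight i then (m - 1) * m ^ q else 0)).
  rewrite card_ord -big_mkcond -(big_ord_widen _ (fun q => (m - 1) * m ^ q)).
    exact: sum_geometric_lt.
  by have := rank_by_lt_card (desc_key N) i; rewrite card_ord => /ltnW.
Qed.

Lemma potential_connect o o' : connect (iflip N) o o' -> potential o' <= potential o.
Proof.
case/connectP => p pth ->{o'}; elim: p o pth => //= o1 p IHp o /andP [flip1 pth].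
exact: leq_trans (IHp _ pth) (ltnW (potential_flip flip1)).
Qed.

Lemma succ_swap x1 x2 i : agree_except i x1 x2 -> x1 i != x2 i ->
  succ N x1 x2 = prefv (cpt N i x1) (x1 i) (x2 i).
Proof.
move=> agr x12; have cpt21 : cpt N i x2 = cpt N i x1.
  by rewrite (cpt_agree_except agr (ok_parent_irr i)).
apply/idP/idP => [/existsP [o1 /andP [flip21 path1]]|pref]; last first.
  apply/existsP; exists x1; rewrite connect0 andbT; apply/existsP; exists i.
  by rewrite agree_except_sym agr cpt21.
apply: contraTT (potential_connect path1) => npref; rewrite -ltnNge.
have flip12 : iflip N x1 x2.
  apply/existsP; exists i; rewrite agr /prefv ltn_neqAle leqNgt npref andbT.
  by rewrite (inj_eq val_inj) (inj_eq perm_inj) eq_sym.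
exact: ltn_trans (potential_flip flip21) (potential_flip flip12).
Qed.

End Semantics.

Section Instances.
Variables (n m : nat) (orient : rel (outcome n m)).
Hypothesis orient_ok : orientation_ok orient.
Implicit Types N : cpnet n m.

Definition swap_instance (x1 x2 : outcome n m) : option (Xswap orient) :=
  if orient x1 x2 then insub (x1, x2) else insub (x2, x1).

Lemma swap_instanceP (x1 x2 : outcome n m) i : agree_except i x1 x2 -> x1 i != x2 i ->
  exists2 x, swap_instance x1 x2 = Some x &
    forall k N, ok_net k N ->
      concept_of orient N x = ~~ orient x1 x2 (+) prefv (cpt N i x1) (x1 i) (x2 i).
Proof.
move=> agr x12; have agr21 : agree_except i x2 x1 by rewrite agree_except_sym.
have x21 : x2 i != x1 i by rewrite eq_sym.
rewrite /swap_instance; case: ifP => or12.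
  have x12X : swapb x1 x2 && orient x1 x2 by rewrite (swapb_agree_except agr x12) or12.
  exists (Sub (x1, x2) x12X); first exact: insubT.
  by move=> k N okN; rewrite ffunE /= (succ_swap okN agr x12).
have or21 : orient x2 x1.
  by rewrite -[orient x2 x1]negbK -(orient_ok (swapb_agree_except agr x12)) or12.
have x21X : swapb x2 x1 && orient x2 x1 by rewrite (swapb_agree_except agr21 x21) or21.
exists (Sub (x2, x1) x21X); first exact: insubT.
move=> k N okN; rewrite ffunE /= (succ_swap okN agr21 x21).
rewrite (cpt_agree_except okN agr21 (ok_parent_irr okN i)) /prefv -leqNgt ltn_neqAle.
by rewrite (inj_eq val_inj) (inj_eq perm_inj) x21.
Qed.

End Instances.

Section Codes.
Variables (n' m' : nat).
Local Notation n := n'.+1.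
Local Notation m := m'.+1.
Implicit Types (A : {set 'I_n}) (o : outcome n m).

(* A context for the variables of [A] is represented by the outcome that
   agrees with it on [A] and is [ord0] elsewhere. *)
Definition slice A o := [forall l, (l \notin A) ==> (o l == ord0)].

Definition proj A o : outcome n m := [ffun l => if l \in A then o l else ord0].

Lemma proj_slice A o : slice A (proj A o).
Proof. by apply/forallP => l; apply/implyP => lA; rewrite ffunE (negbTE lA). Qed.

Lemma proj_in A o j : j \in A -> proj A o j = o j.
Proof. by rewrite ffunE => ->. Qed.

Lemma slice_proj A o : slice A o -> proj A o = o.
Proof.
move=> /forallP sl; apply/ffunP => l; rewrite ffunE; case: ifPn => // lA.
by apply/esym/eqP; apply: (implyP (sl l)).
Qed.

Lemma proj_upd A o j a : j \notin A -> proj A (upd o j a) = proj A o.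
Proof.
move=> jA; apply/ffunP => l; rewrite !ffunE; case: ifP => // lA.
by case: (l =P j) => // lj; rewrite -lj lA in jA.
Qed.

Lemma agree_except_proj A j o o' :
  agree_except j o o' -> agree_except j (proj A o) (proj A o').
Proof. by move=> /agree_exceptP agr; apply/agree_exceptP => l /agr; rewrite !ffunE => ->. Qed.

Lemma card_slice A : #|[set o | slice A o]| = m ^ #|A|.
Proof.
rewrite -[X in X ^ _]card_ord -(card_pffun_on ord0 A predT); apply: eq_card => o.
rewrite inE; apply/forallP/pffun_onP => [sl|[supp _] l]; last first.
  by apply/implyP; apply: contraR => ol; apply: (subsetP supp); rewrite inE.
split=> //; apply/subsetP => l; rewrite inE; apply: contraR => lA.
exact: (implyP (sl l)).
Qed.

(* [(i, g, t)] names the swap of the two values ranked [t] and [t + 1] by the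
   table of [v_i] in the context [g] of [Q i]. *)
Definition codes (Q : 'I_n -> {set 'I_n}) : {set 'I_n * outcome n m * 'I_m} :=
  setX [set io : 'I_n * outcome n m | slice (Q io.1) io.2] [set t : 'I_m | t < m'].

Lemma card_codes Q : #|codes Q| = m' * \sum_i m ^ #|Q i|.
Proof.
rewrite cardsX mulnC; congr (_ * _).
  have -> : [set t : 'I_m | t < m'] = [set~ ord_max].
    by apply/setP => t; rewrite !inE -(inj_eq val_inj) ltn_neqAle leq_ord andbT.
  by rewrite cardsC1 card_ord.
under [RHS]eq_bigr do rewrite -card_slice -sum1_card.
by rewrite pair_big_dep -sum1_card; apply: eq_bigl => -[i o]; rewrite !inE.
Qed.

Definition swap_var (x : outcome n m * outcome n m) : 'I_n :=
  odflt ord0 [pick i | x.1 i != x.2 i].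

Lemma swap_var_eq (x1 x2 : outcome n m) i :
  agree_except i x1 x2 -> x1 i != x2 i -> swap_var (x1, x2) = i.
Proof.
move=> /agree_exceptP agr x12; rewrite /swap_var; case: pickP => [j /= x12j|/(_ i) /=].
  by apply/eqP; apply: contraR x12j => /agr ->.
by rewrite x12.
Qed.

Lemma swap_varP (x1 x2 : outcome n m) : swapb x1 x2 ->
  agree_except (swap_var (x1, x2)) x1 x2 /\ x1 (swap_var (x1, x2)) != x2 (swap_var (x1, x2)).
Proof.
case/cards1P => i diff_i.
have x12 : x1 i != x2 i by have := set11 i; rewrite -diff_i inE.
have agr : agree_except i x1 x2.
  apply/agree_exceptP => l li; apply/eqP; apply: contraNT li => x12l.
  by rewrite -in_set1 -diff_i inE.
by rewrite (swap_var_eq agr x12).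
Qed.

End Codes.

Lemma cpnet_eq n m (N N' : cpnet n m) :
  (forall i, Pa N i = Pa N' i) -> (forall i o, cpt N i o = cpt N' i o) -> N = N'.
Proof.
case: N N' => [P T] [P' T'] eqPa eqT; congr pair; apply/ffunP => i; first exact: eqPa.
by apply/ffunP => o; apply: eqT.
Qed.

Section OkNets.
Variables (n' m' k : nat).
Local Notation n := n'.+1.
Local Notation m := m'.+1.
Variable N : cpnet n m.
Hypothesis okN : ok_net k N.

Lemma cpt_proj i (A : {set 'I_n}) (o : outcome n m) :
  Pa N i \subset A -> cpt N i (proj A o) = cpt N i o.
Proof.
by move=> PaA; apply: (cpt_eq_on_parents okN) => j /(subsetP PaA) /(proj_in o) ->.
Qed.

Definition before i := [set j | topo_key N j < topo_key N i].

Lemma Pa_sub_before i : Pa N i \subset before i.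
Proof. by apply/subsetP => j ji; rewrite inE topo_key_parent ?(ok_acyclic okN). Qed.

Lemma sum_card_before (F : nat -> nat) : \sum_i F #|before i| = \sum_(q < n) F q.
Proof. by rewrite -[in RHS](card_ord n) -(sum_rank_by (@topo_key_inj _ m N)). Qed.

Lemma sum_expn_card_Pa : \sum_i m ^ #|Pa N i| <= \sum_(q < n) m ^ minn q k.
Proof.
rewrite -(sum_card_before (fun q => m ^ minn q k)); apply: leq_sum => i _.
rewrite leq_pexp2l // leq_min (ok_card_parents okN) andbT.
exact: subset_leq_card (Pa_sub_before i).
Qed.

End OkNets.

Section UpperBound.
Variables (n' m' k : nat).
Local Notation n := n'.+1.
Local Notation m := m'.+1.
Variable orient : rel (outcome n m).
Hypothesis orient_ok : orientation_ok orient.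
Implicit Types N : cpnet n m.

Definition probe N (d : 'I_n * outcome n m * 'I_m) : option (Xswap orient) :=
  let: (i, o, t) := d in let p := cpt N i o in
  swap_instance orient (upd o i ((p^-1)%g t)) (upd o i ((p^-1)%g (inord t.+1))).

Definition probes N : {set Xswap orient} := [set x in pmap (probe N) (enum (codes m' (Pa N)))].

Lemma card_probes N : #|probes N| <= m' * \sum_i m ^ #|Pa N i|.
Proof.
rewrite -card_codes cardsE (leq_trans (card_size _)) //.
by rewrite size_pmap cardE count_size.
Qed.

Lemma cpt_eq_on_probes N N' : ok_net k N -> ok_net k N' ->
    {in probes N, concept_of orient N' =1 concept_of orient N} ->
  forall i o, slice (Pa N i) o -> cpt N' i o = cpt N i o.
Proof.
move=> okN okN' agr i o sl; set p := cpt N i o; set q := cpt N' i o.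
suff pq : (p^-1 * q)%g = 1%g by rewrite -[q](mulKVg p) pq mulg1.
apply: perm_incr_id => t u ut; rewrite !permM.
set a := (p^-1)%g t; set b := (p^-1)%g u.
have ab : upd o i a i != upd o i b i.
  by rewrite !upd_same (inj_eq perm_inj); apply/eqP => tu; move: ut; rewrite tu; lia.
have [x px conc] := swap_instanceP orient_ok (agree_except_upd2 o i a b) ab.
have xP : x \in probes N.
  have tu : inord t.+1 = u by apply: val_inj; rewrite /= inordK -ut.
  have tm : t < m' by rewrite -ltnS -ut ltn_ord.
  have pd : probe N (i, o, t) = Some x by rewrite /= tu; exact: px.
  by rewrite inE mem_pmap -pd map_f // mem_enum !inE sl.
have cpt_o N0 : ok_net k N0 -> cpt N0 i (upd o i a) = cpt N0 i o.
  by move=> ok0; rewrite -(cpt_agree_except ok0 (agree_except_upd o i a) (ok_parent_irr ok0 i)).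
have := agr x xP; rewrite (conc _ _ okN') (conc _ _ okN) !cpt_o // !upd_same.
by rewrite /prefv => /addbI ->; rewrite /a /b !permKV ut.
Qed.

Lemma Pa_sub_of_slices N N' i : ok_net k N -> ok_net k N' ->
  (forall o, slice (Pa N i) o -> cpt N' i o = cpt N i o) -> Pa N i \subset Pa N' i.
Proof.
move=> okN okN' eq_sl; rewrite (Pa_relevant okN) (Pa_relevant okN').
have -> : relevant (cpt N i) = relevant (cpt N' i \o proj (Pa N i)).
  by apply: eq_relevant => o /=; rewrite eq_sl ?proj_slice // (cpt_proj okN) ?subxx.
by apply: relevant_comp => j o o'; apply: agree_except_proj.
Qed.

Lemma teaching_set_probes (C : {set {ffun Xswap orient -> bool}}) N :
    C \subset Cac orient k -> ok_net k N ->
    (forall N', ok_net k N' -> concept_of orient N' \in C ->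
       \sum_i #|Pa N' i| <= \sum_i #|Pa N i|) ->
  teaching_set C (concept_of orient N) (probes N).
Proof.
move=> CC okN maxN; apply/forall_inP => c cC; apply/implyP => /forall_inP agr.
have /imsetP [N' + eqc] := subsetP CC c cC; rewrite inE => okN'; subst c.
have eq_sl i o : slice (Pa N i) o -> cpt N' i o = cpt N i o.
  by apply: cpt_eq_on_probes okN okN' _ i o => x /agr /eqP.
have eqPa := eq_sets_of_sum_card (fun i => Pa_sub_of_slices okN okN' (eq_sl i))
  (maxN _ okN' cC).
apply/eqP; congr concept_of; apply: cpnet_eq => [i|i o]; first by rewrite eqPa.
have PaN' : Pa N' i \subset Pa N i by rewrite eqPa.
by rewrite -(cpt_proj okN' o PaN') eq_sl ?proj_slice // (cpt_proj okN) ?subxx.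
Qed.

End UpperBound.

Section LowerBound.
Variables (n' m' k : nat).
Local Notation n := n'.+1.
Local Notation m := m'.+1.
Variable orient : rel (outcome n m).
Hypothesis orient_ok : orientation_ok orient.
Variable N : cpnet n m.
Hypothesis okN : ok_net k N.

(* The neighbours of [N] give v_i this parent set: it contains [Pa N i], has the
   largest size the class allows, and consists of predecessors of v_i, which
   keeps the neighbours acyclic. *)
Definition pad i : {set 'I_n} :=
  odflt set0 [pick Q : {set 'I_n} |
    [&& Pa N i \subset Q, Q \subset before N i & #|Q| == minn #|before N i| k]].

Lemma padP i :
  [/\ Pa N i \subset pad i, pad i \subset before N i & #|pad i| = minn #|before N i| k].
Proof.
rewrite /pad; case: pickP => [Q /and3P [PaQ Qb /eqP cardQ] //|none].
have PaB := Pa_sub_before okN i.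
have bounds : #|Pa N i| <= minn #|before N i| k <= #|before N i|.
  by rewrite geq_minl leq_min subset_leq_card // ok_card_parents.
have [Q [PaQ Qb cardQ]] := exists_set_between PaB bounds.
by have := none Q; rewrite PaQ Qb cardQ eqxx.
Qed.

Lemma notin_pad i : i \notin pad i.
Proof.
have [_ padB _] := padP i; apply: contraTN isT => /(subsetP padB).
by rewrite inE ltnn.
Qed.

(* [neighbour i g t] disagrees with [N] only on instances decoding to
   [(i, g, t)], so [decode] maps every teaching set of [N] onto the codes. *)
Definition decode (x : Xswap orient) : 'I_n * outcome n m * 'I_m :=
  let: (x1, x2) := val x in let i := swap_var (x1, x2) in let p := cpt N i x1 in
  (i, proj (pad i) x1, if p (x1 i) < p (x2 i) then p (x1 i) else p (x2 i)).

Section Neighbour.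
Variables (i : 'I_n) (g : outcome n m) (t : 'I_m).
Hypotheses (g_slice : slice (pad i) g) (t_lt : t < m').

Lemma inord_succ : (inord t.+1 : 'I_m) = t.+1 :> nat.
Proof. by rewrite inordK. Qed.

Definition neighbour_cpt o : {perm 'I_m} :=
  if proj (pad i) o == g then (cpt N i o * tperm t (inord t.+1))%g else cpt N i o.

Definition neighbour : cpnet n m :=
  ([ffun l => if l == i then relevant neighbour_cpt else Pa N l],
   [ffun l => if l == i then [ffun o => neighbour_cpt o] else N.2 l]).

Lemma Pa_neighbour l : Pa neighbour l = if l == i then relevant neighbour_cpt else Pa N l.
Proof. by rewrite /Pa ffunE. Qed.

Lemma cpt_neighbour l o : cpt neighbour l o = if l == i then neighbour_cpt o else cpt N l o.
Proof. by rewrite /cpt ffunE; case: eqP; rewrite ?ffunE. Qed.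

Lemma relevant_neighbour_cpt : relevant neighbour_cpt \subset pad i.
Proof.
have [Pa_pad _ _] := padP i; apply: relevant_sub => o o' agr.
rewrite /neighbour_cpt -(cpt_proj okN o Pa_pad) -(cpt_proj okN o' Pa_pad).
have -> // : proj (pad i) o = proj (pad i) o'.
by apply/ffunP => l; rewrite !ffunE; case: ifP => // /agr.
Qed.

Lemma neighbour_ok : ok_net k neighbour.
Proof.
have [_ pad_before card_pad] := padP i.
have relevant_before : relevant neighbour_cpt \subset before N i.
  exact: subset_trans relevant_neighbour_cpt pad_before.
have /andP [wf nd] : cpt_wf neighbour && nondummy neighbour.
  rewrite cpt_wf_nondummy; apply/forallP => l.
  rewrite Pa_neighbour (eq_relevant (cpt_neighbour l)).
  by case: (l =P i) => _; rewrite ?(Pa_relevant okN).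
apply/and5P; split; [|exact: wf|exact: nd| |].
- apply/forallP => l; rewrite Pa_neighbour.
  case: (l =P i) => [->|_]; last exact: ok_parent_irr okN l.
  by apply: contra (notin_pad i); apply: (subsetP relevant_neighbour_cpt).
- apply: (@acyclic_of_key _ _ _ (topo_key N)) => l j; rewrite Pa_neighbour.
  case: (l =P i) => [->|_]; last exact: topo_key_parent (ok_acyclic okN).
  by move/(subsetP relevant_before); rewrite inE.
- apply/forallP => l; rewrite Pa_neighbour.
  case: (l =P i) => _; last exact: ok_card_parents okN l.
  by rewrite (leq_trans (subset_leq_card relevant_neighbour_cpt)) // card_pad geq_minr.
Qed.

Lemma decode_neighbour x :
  concept_of orient neighbour x != concept_of orient N x -> decode x = (i, g, t).
Proof.
rewrite /decode; case: x => -[x1 x2] /= x12X; have /andP [sw _] := x12X; rewrite !ffunE /=.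
have [agr x12] := swap_varP sw; set j := swap_var _ in agr x12 *.
rewrite (succ_swap neighbour_ok agr x12) (succ_swap okN agr x12) cpt_neighbour.
case: (eqVneq j i) => [ji|_]; last by rewrite eqxx.
rewrite ji /neighbour_cpt; case: (proj (pad i) x1 =P g) => [pg|_]; last by rewrite eqxx.
by rewrite pg /prefv !permM => /(tperm_adjacent inord_succ) ->.
Qed.

Lemma neighbour_differs : exists x, concept_of orient neighbour x != concept_of orient N x.
Proof.
set p := cpt N i g; set a := (p^-1)%g t; set b := (p^-1)%g (inord t.+1).
have ab : upd g i a i != upd g i b i.
  by rewrite !upd_same (inj_eq perm_inj) -(inj_eq val_inj) /= inord_succ ltn_eqF.
have [x _ conc] := swap_instanceP orient_ok (agree_except_upd2 g i a b) ab.
exists x; rewrite (conc _ _ neighbour_ok) (conc _ _ okN) cpt_neighbour eqxx /neighbour_cpt.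
rewrite proj_upd ?notin_pad // (slice_proj g_slice) eqxx.
rewrite -(cpt_agree_except okN (agree_except_upd g i a) (ok_parent_irr okN i)) -/p.
rewrite /prefv !upd_same !permM /a /b !permKV tpermL tpermR inord_succ ltnSn ltnNge leqnSn.
by case: (orient _ _).
Qed.

End Neighbour.

Lemma card_teaching_set_ge S : teaching_set (Cac orient k) (concept_of orient N) S ->
  m' * \sum_(q < n) m ^ minn q k <= #|S|.
Proof.
move=> tS; rewrite -(sum_card_before N (fun q => m ^ minn q k)).
under eq_bigr => i _ do have [_ _ <-] := padP i.
rewrite -card_codes; apply: leq_trans (leq_imset_card decode S).
apply/subset_leq_card/subsetP => -[[i g] t]; rewrite !inE /= => /andP [g_sl t_lt].
have [x dx] := neighbour_differs g_sl t_lt.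
have neighbourC : concept_of orient (neighbour i g t) \in Cac orient k.
  by rewrite imset_f ?inE ?neighbour_ok.
have /existsP [y /andP [yS dy]] :
    [exists y in S, concept_of orient (neighbour i g t) y != concept_of orient N y].
  by rewrite -negb_forall_in; apply: contra dx => /(implyP (forall_inP tS _ neighbourC)) /eqP ->.
by apply/imsetP; exists y; rewrite ?(decode_neighbour t_lt dy).
Qed.

End LowerBound.

Section Main.
Variables (n' m' k : nat).
Local Notation n := n'.+1.
Local Notation m := m'.+2.
Variable orient : rel (outcome n m).
Hypothesis orient_ok : orientation_ok orient.
Hypothesis k_lt_n : k < n.

Definition empty_net : cpnet n m := ([ffun=> set0], [ffun=> [ffun=> 1%g]]).

Lemma empty_net_ok : ok_net k empty_net.
Proof.
have Pa0 i : Pa empty_net i = set0 by rewrite /Pa ffunE.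
have /andP [wf nd] : cpt_wf empty_net && nondummy empty_net.
  rewrite cpt_wf_nondummy; apply/forallP => i; rewrite Pa0 eq_sym -subset0.
  by apply: relevant_sub => o o' _; rewrite /cpt !ffunE.
apply/and5P; split; [|exact: wf|exact: nd| |].
- by apply/forallP => i; rewrite Pa0 inE.
- by apply: (@acyclic_of_key _ _ _ (fun=> 0)) => i j; rewrite Pa0 inE.
- by apply/forallP => i; rewrite Pa0 cards0.
Qed.

Lemma sum_expn_minn_Mk : \sum_(q < n) m ^ minn q k = Mk n m k.
Proof. by apply: sum_expn_minn; last exact: ltnW. Qed.

Lemma card_teaching_set_Cac_ge c S : c \in Cac orient k -> teaching_set (Cac orient k) c S ->
  m'.+1 * Mk n m k <= #|S|.
Proof.
case/imsetP => N; rewrite inE => okN -> tS.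
rewrite -sum_expn_minn_Mk; exact (card_teaching_set_ge orient_ok okN tS).
Qed.

Lemma Cac_subclass_TD_le (C : {set {ffun Xswap orient -> bool}}) :
  C \subset Cac orient k -> C != set0 ->
  exists2 c, c \in C & TD C c <= m'.+1 * Mk n m k.
Proof.
move=> CC /set0Pn [c cC]; have /imsetP [N0 + c_N0] := subsetP CC c cC; rewrite inE => okN0.
pose inC N := ok_net k N && (concept_of orient N \in C).
have N0C : inC N0 by rewrite /inC okN0 -c_N0.
case: (arg_maxnP (fun N => \sum_i #|Pa N i|) N0C) => N /andP [okN NC] maxN.
exists (concept_of orient N) => //.
have tN : teaching_set C (concept_of orient N) (probes orient N).
  by apply: (teaching_set_probes orient_ok CC okN) => N' okN' N'C; apply: maxN; rewrite /inC okN'.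
apply: leq_trans (TD_le tN) _; apply: leq_trans (card_probes _ _) _.
by rewrite leq_mul2l -sum_expn_minn_Mk (sum_expn_card_Pa okN) orbT.
Qed.

End Main.

Theorem theorem2 (n m k : nat) (orient : rel (outcome n m)) :
  1 <= n -> 2 <= m -> k < n -> orientation_ok orient ->
  RTD (Cac orient k) = (m - 1) * Mk n m k /\
  RTD (Cac orient k) = (m - 1) * (n - k) * m ^ k + m ^ k - 1.
Proof.
case: n orient => [|n'] orient // _; case: m orient => [|[|m']] orient // _ k_lt_n orient_ok.
have RTD_Cac : RTD (Cac orient k) = m'.+1 * Mk n'.+1 m'.+2 k.
  apply: RTD_eq; last exact: Cac_subclass_TD_le.
    apply/set0Pn; exists (concept_of orient (empty_net n' m')).
    by apply: imset_f; rewrite inE; apply: empty_net_ok.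
  by move=> c S; apply: card_teaching_set_Cac_ge.
by rewrite -Mk_closed // RTD_Cac subn1.
Qed.
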